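(* Suppose $f(i,y,z)$ is convex in $(y,z)$. For $i=0,\ldots,n-1$, $\omega\in\Omega$, $z\in\mathbb R^D$, define the convex conjugate in $y$, $$f^{\#y}(\omega,i,r,z)=\sup_{y\in\mathbb R}\{ry-f(\omega,i,y,z)\},$$ with effective domain $D^{(i,\omega,z)}_{f^{\#y}}=\{r\in\mathbb R: f^{\#y}(\omega,i,r,z)<\infty\}$; this domain is contained in $[-\alpha^{(0)}_i(\omega),\alpha^{(0)}_i(\omega)]$. Then for every $(M^0,M)\in\mathcal M_{1+D}$ and $i=0,\ldots,n-1$, $$\theta^{up}_i=\max\Big\{S_i,\;\sup_{r\in D^{(i,\omega,z^{up}_i(\omega))}_{f^{\#y}}}\frac{1}{1-r\Delta_i}\Big(\theta^{up}_{i+1}-(M^0_{i+1}-M^0_i)-f^{\#y}(i,r,z^{up}_i)\Delta_i\Big)\Big\},$$ where $\theta^{up}=\theta^{up}(M^0,M)$ and $z^{up}_i=\beta_{i+1}\theta^{up}_{i+1}-(M_{i+1}-M_i)$.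
   Context: Standing setting: $n\ge 1$ and $D\ge 1$ are integers; $(\Omega,\mathcal F,(\mathcal F_i)_{i=0,\ldots,n},P)$ is a filtered probability space and $E_i[\cdot]=E[\cdot\mid\mathcal F_i]$. The constants $\Delta_0,\ldots,\Delta_{n-1}$ are positive reals. $S=(S_i)_{i=0,\ldots,n}$ is an adapted process with values in $\mathbb R\cup\{-\infty\}$, $S_n$ real-valued, with $\sum_{i=0}^{n-1}E[|S_i\mathbf 1_{\{S_i>-\infty\}}|]+E[|S_n|]<\infty$. The random field $f:\Omega\times\{0,\ldots,n-1\}\times\mathbb R\times\mathbb R^D\to\mathbb R$ is measurable, $f(\cdot,i,y,z)$ is $\mathcal F_i$-measurable for every $(y,z)$ (the dependence on $\omega$ is suppressed), $\sum_{i=0}^{n-1}E[|f(i,0,0)|]<\infty$, and there are adapted nonnegative processes $\alpha^{(0)},\ldots,\alpha^{(D)}$ with $|f(i,y,z)-f(i,y',z')|\le\alpha^{(0)}_i|y-y'|+\sum_{d=1}^D\alpha^{(d)}_i|z_d-z'_d|$ for all $(y,z),(y',z')\in\mathbb R\times\mathbb R^D$. $\beta=(\beta_i)_{i=1,\ldots,n}$ is a bounded adapted $\mathbb R^D$-valued process, and for $i=0,\ldots,n-1$ almost surely $\alpha^{(0)}_i<1/\Delta_i$ and $\sum_{d=1}^D\alpha^{(d)}_i|\beta_{d,i+1}|\le 1/\Delta_i$. $\mathcal M_{1+D}$ is the set of pairs $(M^0,M)$ where $M^0$ is a real-valued martingale and $M=(M_1,\ldots,M_D)$ an $\mathbb R^D$-valued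 martingale with $\sum_{d=1}^D\sum_{i=0}^{n-1}E[\alpha^{(d)}_i|M_{d,i+1}-M_{d,i}|]\Delta_i<\infty$. For $(M^0,M)\in\mathcal M_{1+D}$, the (non-adapted) process $\theta^{up}=\theta^{up}(M^0,M)$ is defined pathwise by $\theta^{up}_n=S_n$ and, for $i=n-1,\ldots,0$, as the unique solution (it exists since $\alpha^{(0)}_i\Delta_i<1$) of $$\theta^{up}_i=\max\{S_i,\;\theta^{up}_{i+1}-(M^0_{i+1}-M^0_i)+f(i,\theta^{up}_i,\beta_{i+1}\theta^{up}_{i+1}-(M_{i+1}-M_i))\Delta_i\}.$$ *)

From Stdlib Require Import Reals Lra Lia.
Open Scope R_scope.

(* Vectors of R^D are represented as functions nat -> R; only the components
   0..D-1 are used (the Lipschitz hypothesis makes f independent of the others). *)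
Definition vec := nat -> R.

Fixpoint sumD (D : nat) (g : nat -> R) : R :=
  match D with
  | O => 0
  | S k => sumD k g + g k
  end.

(* Values in R ∪ {-oo}: None stands for -oo. *)
Definition emax (s : option R) (x : R) : R :=
  match s with
  | None => x
  | Some a => Rmax a x
  end.

Definition convex_yz (g : R -> vec -> R) : Prop :=
  forall (t y1 y2 : R) (z1 z2 : vec), 0 <= t <= 1 ->
    g (t * y1 + (1 - t) * y2) (fun d => t * z1 d + (1 - t) * z2 d)
    <= t * g y1 z1 + (1 - t) * g y2 z2.

Definition conj_set (h : R -> R) (r : R) : R -> Prop :=
  fun v => exists y : R, v = r * y - h y.

Definition conj_val (h : R -> R) (r c : R) : Prop := is_lub (conj_set h r) c.

(* r belongs to the effective domain of h^#, i.e. h^#(r) < +oo. *)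
Definition conj_dom (h : R -> R) (r : R) : Prop := bound (conj_set h r).

From Stdlib Require Import Reals Lra FunctionalExtensionality.
Open Scope R_scope.

(* Fix w, i and freeze the z-argument at z^up; then h(y) := f(i,y,z^up) is a
   convex, a-Lipschitz function of one real variable (a = alpha0_i) and
   x := theta_i solves the scalar fixed-point equation x = max{S, A + h(x) Delta}
   with A := theta_{i+1} - (M0_{i+1} - M0_i).  Everything then follows from
   one-dimensional convex analysis:
   - the effective domain of h^# is contained in [-a, a], because r*y - h(y)
     grows without bound along a ray as soon as |r| > a;
   - since a Delta < 1, Fenchel-Young (r x - h x <= h^#(r)) shows that x bounds
     every dual value (A - h^#(r) Delta) / (1 - r Delta) from above;
   - a subgradient r0 of h at x (the supremum of the left difference quotients)
     attains h^#(r0) = r0 x - h x, and its dual value equals x whenever the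
     second branch of the maximum is the active one. *)

(* The Lipschitz modulus of f w.r.t. z contributes nothing when z is fixed. *)
Lemma sumD_zero (D : nat) (g : nat -> R) : (forall d, g d = 0) -> sumD D g = 0.
Proof. intros Hg; induction D as [|k IH]; simpl; [reflexivity | rewrite IH, Hg; ring]. Qed.

Definition lipschitz (h : R -> R) (a : R) : Prop :=
  forall y y', Rabs (h y - h y') <= a * Rabs (y - y').

Definition convex (h : R -> R) : Prop :=
  forall t y1 y2, 0 <= t <= 1 -> h (t * y1 + (1 - t) * y2) <= t * h y1 + (1 - t) * h y2.

(* Reflecting y -> -y maps the conjugate set of h at r to that of h(-.) at -r;
   it reduces the left end of the domain bound to the right end. *)
Lemma conj_set_reflect (h : R -> R) (r v : R) :
  conj_set (fun y => h (- y)) (- r) v -> conj_set h r v.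
Proof. intros [y ->]. exists (- y). ring. Qed.

Lemma lipschitz_reflect (h : R -> R) (a : R) :
  lipschitz h a -> lipschitz (fun y => h (- y)) a.
Proof.
  intros Hl y y'. rewrite <- (Rabs_Ropp (y - y')).
  replace (- (y - y')) with (- y - - y') by ring. apply Hl.
Qed.

Lemma conj_set_unbounded (h : R -> R) (a r m : R) :
  lipschitz h a -> a < r -> exists v, conj_set h r v /\ m < v.
Proof.
  intros Hl Har.
  set (K := Rabs m + Rabs (h 0) + 1).
  set (y := K / (r - a)).
  assert (HK : m < K - h 0).
  { unfold K. pose proof (Rle_abs m). pose proof (Rle_abs (h 0)). lra. }
  assert (Hy : 0 <= y).
  { unfold y, Rdiv. apply Rmult_le_pos.
    - unfold K. pose proof (Rabs_pos m). pose proof (Rabs_pos (h 0)). lra.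
    - left. apply Rinv_0_lt_compat. lra. }
  assert (Hya : (r - a) * y = K) by (unfold y; field; lra).
  exists (r * y - h y). split; [exists y; reflexivity |].
  pose proof (Hl y 0) as Hh. rewrite Rminus_0_r, (Rabs_pos_eq y Hy) in Hh.
  pose proof (Rle_abs (h y - h 0)). lra.
Qed.

Lemma conj_dom_bounded (h : R -> R) (a r : R) :
  lipschitz h a -> conj_dom h r -> - a <= r <= a.
Proof.
  intros Hl [m Hm].
  assert (Hright : forall g s, lipschitz g a -> a < s -> ~ bound (conj_set g s)).
  { intros g s Hg Hs [m' Hm']. destruct (conj_set_unbounded g a s m' Hg Hs) as [v [Hv Hmv]].
    pose proof (Hm' v Hv). lra. }
  split; apply Rnot_lt_le; intro Hr.
  - apply (Hright (fun y => h (- y)) (- r) (lipschitz_reflect h a Hl)); [lra |].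
    exists m. intros v Hv. apply Hm, conj_set_reflect, Hv.
  - apply (Hright h r Hl Hr). exists m. exact Hm.
Qed.

Lemma fenchel_young (h : R -> R) (r c x : R) : conj_val h r c -> r * x - h x <= c.
Proof. intros [Hub _]. apply Hub. exists x. reflexivity. Qed.

Lemma conj_val_subgradient (h : R -> R) (r x : R) :
  (forall u, r * (u - x) <= h u - h x) -> conj_val h r (r * x - h x).
Proof.
  intros Hsub. split.
  - intros v [y ->]. pose proof (Hsub y). lra.
  - intros m Hm. apply Hm. exists x. reflexivity.
Qed.

Section Subgradient.

Variables (h : R -> R) (a x : R).
Hypothesis Hlip : lipschitz h a.
Hypothesis Hconv : convex h.

Definition left_slopes : R -> Prop :=
  fun q => exists t, 0 < t /\ q = (h x - h (x - t)) / t.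

Lemma left_slopes_bounded : is_upper_bound left_slopes a.
Proof.
  intros q [t [Ht ->]].
  pose proof (Hlip x (x - t)) as H.
  replace (x - (x - t)) with t in H by ring.
  rewrite (Rabs_pos_eq t) in H by lra.
  pose proof (Rle_abs (h x - h (x - t))).
  apply Rmult_le_reg_r with t; [exact Ht |].
  replace ((h x - h (x - t)) / t * t) with (h x - h (x - t)) by (field; lra). lra.
Qed.

Lemma slope_monotone (s t : R) : 0 < s -> 0 < t ->
  s * (h x - h (x - t)) <= t * (h (x + s) - h x).
Proof.
  intros Hs Ht.
  set (l := s / (s + t)).
  assert (Hl : 0 <= l <= 1).
  { unfold l. split.
    - apply Rmult_le_pos; [lra | left; apply Rinv_0_lt_compat; lra].
    - apply Rmult_le_reg_r with (s + t); [lra |].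
      replace (s / (s + t) * (s + t)) with s by (field; lra). lra. }
  pose proof (Hconv l (x - t) (x + s) Hl) as Hc.
  replace (l * (x - t) + (1 - l) * (x + s)) with x in Hc by (unfold l; field; lra).
  apply Rmult_le_compat_l with (r := s + t) in Hc; [| lra].
  replace ((s + t) * (l * h (x - t) + (1 - l) * h (x + s)))
    with (s * h (x - t) + t * h (x + s)) in Hc by (unfold l; field; lra).
  lra.
Qed.

(* The supremum of the left quotients is a subgradient of h at x. *)
Lemma subgradient_exists : exists r, forall u, r * (u - x) <= h u - h x.
Proof.
  assert (Hne : exists q, left_slopes q).
  { exists ((h x - h (x - 1)) / 1). exists 1. split; [lra | reflexivity]. }
  destruct (completeness left_slopes (ex_intro _ a left_slopes_bounded) Hne)
    as [r [Hub Hlub]].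
  exists r. intro u.
  destruct (Rtotal_order u x) as [Hlt | [Heq | Hgt]].
  - assert (Hq : left_slopes ((h x - h u) / (x - u))).
    { exists (x - u). split; [lra |]. replace (x - (x - u)) with u by ring. reflexivity. }
    assert (Hm : (h x - h u) / (x - u) * (x - u) <= r * (x - u))
      by (apply Rmult_le_compat_r; [lra | exact (Hub _ Hq)]).
    replace ((h x - h u) / (x - u) * (x - u)) with (h x - h u) in Hm by (field; lra).
    lra.
  - subst. lra.
  - set (s := u - x).
    assert (Hs : 0 < s) by (unfold s; lra).
    assert (Hright : is_upper_bound left_slopes ((h u - h x) / s)).
    { intros q [t [Ht ->]].
      pose proof (slope_monotone s t Hs Ht) as Hm.
      replace (x + s) with u in Hm by (unfold s; ring).
      apply Rmult_le_reg_r with (s * t); [apply Rmult_lt_0_compat; lra |].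
      replace ((h x - h (x - t)) / t * (s * t)) with (s * (h x - h (x - t))) by (field; lra).
      replace ((h u - h x) / s * (s * t)) with (t * (h u - h x)) by (field; lra).
      lra. }
    assert (H2 : r * s <= (h u - h x) / s * s)
      by (apply Rmult_le_compat_r; [lra | exact (Hlub _ Hright)]).
    replace ((h u - h x) / s * s) with (h u - h x) in H2 by (field; lra).
    lra.
Qed.

End Subgradient.

Lemma emax_ge (S : option R) (v : R) : v <= emax S v.
Proof. destruct S; simpl; [apply Rmax_r | lra]. Qed.

Lemma emax_replace (S : option R) (phi L x : R) :
  x = emax S phi -> L <= x -> (phi = x -> L = x) -> x = emax S L.
Proof.
  intros Hx HLx Hphi.
  destruct (Req_dec phi x) as [Heq | Hne].
  - rewrite (Hphi Heq). rewrite Heq in Hx. exact Hx.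
  - destruct S as [s |]; simpl in *; [| lra].
    unfold Rmax in *. destruct (Rle_dec s phi); [lra |].
    destruct (Rle_dec s L); lra.
Qed.

Section DualRepresentation.

Variables (h : R -> R) (a Dl A : R).
Hypothesis Hlip : lipschitz h a.
Hypothesis Hconv : convex h.
Hypothesis HDl : 0 < Dl.
Hypothesis HaDl : a < / Dl.

Definition dual_values : R -> Prop :=
  fun v => exists r c, conj_dom h r /\ conj_val h r c /\
             v = / (1 - r * Dl) * (A - c * Dl).

Lemma dual_weight_pos (r : R) : conj_dom h r -> 0 < 1 - r * Dl.
Proof.
  intros Hr. destruct (conj_dom_bounded h a r Hlip Hr) as [_ Hra].
  apply Rmult_lt_compat_r with (r := Dl) in HaDl; [| exact HDl].
  rewrite Rinv_l in HaDl by lra.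
  assert (r * Dl <= a * Dl) by (apply Rmult_le_compat_r; lra). lra.
Qed.

Lemma dual_values_bounded (x : R) : A + h x * Dl <= x -> is_upper_bound dual_values x.
Proof.
  intros Hx v [r [c [Hd [Hc ->]]]].
  pose proof (dual_weight_pos r Hd) as Hk.
  assert (Hyc : (r * x - h x) * Dl <= c * Dl)
    by (apply Rmult_le_compat_r; [lra | exact (fenchel_young h r c x Hc)]).
  assert (H : A - c * Dl <= x * (1 - r * Dl)) by lra.
  apply Rmult_le_compat_l with (r := / (1 - r * Dl)) in H;
    [| left; apply Rinv_0_lt_compat; exact Hk].
  replace (/ (1 - r * Dl) * (x * (1 - r * Dl))) with x in H by (field; lra).
  exact H.
Qed.

Lemma dual_value_subgradient (x r : R) :
  (forall u, r * (u - x) <= h u - h x) -> A + h x * Dl = x ->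
  dual_values x.
Proof.
  intros Hsub Hfix.
  pose proof (conj_val_subgradient h r x Hsub) as Hc.
  assert (Hd : conj_dom h r) by (exists (r * x - h x); apply Hc).
  exists r, (r * x - h x). split; [exact Hd | split; [exact Hc |]].
  pose proof (dual_weight_pos r Hd).
  replace A with (x - h x * Dl) by lra. field. lra.
Qed.

Lemma dual_representation (S : option R) (x : R) :
  x = emax S (A + h x * Dl) ->
  exists L, is_lub dual_values L /\ x = emax S L.
Proof.
  intros Hx.
  assert (Hphi : A + h x * Dl <= x) by (rewrite Hx at 2; apply emax_ge).
  pose proof (dual_values_bounded x Hphi) as Hup.
  destruct (subgradient_exists h a x Hlip Hconv) as [r0 Hr0].
  pose proof (conj_val_subgradient h r0 x Hr0) as Hc0.
  assert (Hd0 : conj_dom h r0) by (exists (r0 * x - h x); apply Hc0).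
  assert (Hne : exists v, dual_values v)
    by (eexists; exists r0, (r0 * x - h x); split; [exact Hd0 | split; [exact Hc0 | reflexivity]]).
  destruct (completeness dual_values (ex_intro _ x Hup) Hne) as [L HL].
  exists L. split; [exact HL |].
  apply (emax_replace S (A + h x * Dl)); [exact Hx | apply HL, Hup |].
  intros Hfix. apply Rle_antisym; [apply HL, Hup |].
  apply HL. exact (dual_value_subgradient x r0 Hr0 Hfix).
Qed.

End DualRepresentation.

Theorem proposition3p2
  (Omega : Type) (n D : nat) (Delta : nat -> R)
  (Sp : Omega -> nat -> option R)
  (f : Omega -> nat -> R -> vec -> R)
  (alpha0 : Omega -> nat -> R) (alpha : Omega -> nat -> nat -> R)
  (beta : Omega -> nat -> vec)
  (M0 : Omega -> nat -> R) (M : Omega -> nat -> vec)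
  (theta : Omega -> nat -> R)
  (HDelta : forall i, (i < n)%nat -> 0 < Delta i)
  (Halpha0 : forall w i, (i < n)%nat -> 0 <= alpha0 w i)
  (Halpha : forall w i d, (i < n)%nat -> (d < D)%nat -> 0 <= alpha w i d)
  (Hlip : forall w i y y' z z', (i < n)%nat ->
     Rabs (f w i y z - f w i y' z') <=
       alpha0 w i * Rabs (y - y') + sumD D (fun d => alpha w i d * Rabs (z d - z' d)))
  (Hbeta_bdd : exists K, forall w i d, (1 <= i <= n)%nat -> (d < D)%nat ->
     Rabs (beta w i d) <= K)
  (Hcond0 : forall w i, (i < n)%nat -> alpha0 w i < / Delta i)
  (Hcond1 : forall w i, (i < n)%nat ->
     sumD D (fun d => alpha w i d * Rabs (beta w (S i) d)) <= / Delta i)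
  (Hconvex : forall w i, (i < n)%nat -> convex_yz (f w i))
  (* theta = theta^up(M0, M): the (unique) pathwise solution of the recursion *)
  (Htheta_n : forall w, Sp w n = Some (theta w n))
  (Htheta : forall w i, (i < n)%nat ->
     theta w i = emax (Sp w i)
       (theta w (S i) - (M0 w (S i) - M0 w i)
        + f w i (theta w i)
            (fun d => beta w (S i) d * theta w (S i) - (M w (S i) d - M w i d))
          * Delta i)) :
  forall w i, (i < n)%nat ->
    let zup := fun d => beta w (S i) d * theta w (S i) - (M w (S i) d - M w i d) in
    (forall r, conj_dom (fun y => f w i y zup) r -> - alpha0 w i <= r <= alpha0 w i) /\
    exists L : R,
      is_lub (fun v => exists r c,
                 conj_dom (fun y => f w i y zup) r /\
                 conj_val (fun y => f w i y zup) r c /\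
                 v = / (1 - r * Delta i) *
                     (theta w (S i) - (M0 w (S i) - M0 w i) - c * Delta i)) L /\
      theta w i = emax (Sp w i) L.
Proof.
  intros w i Hi zup.
  assert (Hl : lipschitz (fun y => f w i y zup) (alpha0 w i)).
  { intros y y'. pose proof (Hlip w i y y' zup zup Hi) as H.
    rewrite sumD_zero in H; [lra |]. intro d. rewrite Rminus_diag, Rabs_R0. ring. }
  assert (Hc : convex (fun y => f w i y zup)).
  { intros t y1 y2 Ht. pose proof (Hconvex w i Hi t y1 y2 zup zup Ht) as H.
    replace (fun d => t * zup d + (1 - t) * zup d) with zup in H
      by (apply functional_extensionality; intro; ring).
    exact H. }
  split.
  - intros r Hr. exact (conj_dom_bounded _ _ r Hl Hr).
  - exact (dual_representation _ (alpha0 w i) (Delta i) _ Hl Hc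
             (HDelta i Hi) (Hcond0 w i Hi) (Sp w i) (theta w i)
             (Htheta w i Hi)).
Qed.
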